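(* Let $G$ be a residually finite group acting (on the right) primitively on an infinite set $X$, $(x,g)\mapsto x\cdot g$. Let $M=\{1\}\cup G\cup X\cup\{0\}$ be the monoid with identity $1$ and zero $0$, with multiplication extending that of $G$ and given by $xg=x\cdot g$, $gx=0$, $xy=0$ for $g\in G$, $x,y\in X$. Then $I=X\cup\{0\}$ is an ideal of $M$ which is residually finite (as a semigroup), the Rees quotient $M/I$ is residually finite, but $M$ is not residually finite.
   Context: For an ideal $I$ of a monoid $M$, the Rees quotient $M/I$ is the quotient by the congruence $\Delta_M\cup(I\times I)$, where $\Delta_M=\{(x,x):x\in M\}$. A semigroup/monoid is residually finite if distinct elements are separated by homomorphisms to finite semigroups/monoids. A group action on $X$ is primitive if it is transitive and the only $G$-invariant partitions of $X$ are the trivial ones. *)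

From HB Require Import structures.
From mathcomp Require Import all_boot all_fingroup.
From Stdlib Require List.
Set Implicit Arguments. Unset Strict Implicit. Unset Printing Implicit Defensive.

Definition is_group (G : Type) (mul : G -> G -> G) (one : G) (inv : G -> G) : Prop :=
  (forall a b c, mul a (mul b c) = mul (mul a b) c) /\
  (forall a, mul one a = a) /\ (forall a, mul a one = a) /\
  (forall a, mul (inv a) a = one) /\ (forall a, mul a (inv a) = one).

Definition residually_finite_group (G : Type) (mul : G -> G -> G) : Prop :=
  forall g h : G, g <> h ->
    exists (H : finGroupType) (f : G -> H),
      (forall a b, f (mul a b) = (f a * f b)%g) /\ f g <> f h.

Definition is_right_action (G X : Type) (mul : G -> G -> G) (one : G)
  (act : X -> G -> X) : Prop :=
  (forall x, act x one = x) /\ (forall x g h, act x (mul g h) = act (act x g) h).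

Definition transitive_action (G X : Type) (act : X -> G -> X) : Prop :=
  (exists x : X, True) /\ forall x y : X, exists g, act x g = y.

Definition equivalence_rel (X : Type) (E : X -> X -> Prop) : Prop :=
  (forall x, E x x) /\ (forall x y, E x y -> E y x) /\
  (forall x y z, E x y -> E y z -> E x z).

Definition primitive_action (G X : Type) (act : X -> G -> X) : Prop :=
  transitive_action act /\
  forall E : X -> X -> Prop, equivalence_rel E ->
    (forall x y g, E x y -> E (act x g) (act y g)) ->
    (forall x y, E x y -> x = y) \/ (forall x y, E x y).

Definition infinite_type (X : Type) : Prop :=
  ~ exists l : list X, forall x, List.In x l.

Inductive Mon (G X : Type) : Type :=
| Mone : Mon G X
| MG : G -> Mon G X
| MX : X -> Mon G X
| Mzero : Mon G X.
Arguments Mone {G X}. Arguments Mzero {G X}.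

Definition Mmul (G X : Type) (mul : G -> G -> G) (act : X -> G -> X)
  (a b : Mon G X) : Mon G X :=
  match a, b with
  | Mone, _ => b
  | _, Mone => a
  | MG g, MG h => MG X (mul g h)
  | MG _, MX _ => Mzero
  | MX x, MG g => MX G (act x g)
  | MX _, MX _ => Mzero
  | _, Mzero => Mzero
  | Mzero, _ => Mzero
  end.

Definition inI (G X : Type) (m : Mon G X) : Prop :=
  match m with MX _ | Mzero => True | _ => False end.

Definition is_ideal (S : Type) (op : S -> S -> S) (P : S -> Prop) : Prop :=
  (exists s, P s) /\ forall s a, P a -> P (op s a) /\ P (op a s).

Definition finite_semigroup (T : finType) (opT : T -> T -> T) : Prop :=
  forall a b c, opT a (opT b c) = opT (opT a b) c.

Definition finite_monoid (T : finType) (opT : T -> T -> T) (eT : T) : Prop :=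
  finite_semigroup opT /\ (forall a, opT eT a = a) /\ (forall a, opT a eT = a).

(* the subsemigroup P of S (closed under op) is residually finite as a
   semigroup: distinct elements of P separated by semigroup homomorphisms
   from P to finite semigroups (a map defined on S, homomorphic on P) *)
Definition rf_subsemigroup (S : Type) (op : S -> S -> S) (P : S -> Prop) : Prop :=
  forall s t, P s -> P t -> s <> t ->
    exists (T : finType) (opT : T -> T -> T) (f : S -> T),
      finite_semigroup opT /\
      (forall a b, P a -> P b -> f (op a b) = opT (f a) (f b)) /\ f s <> f t.

Definition rf_monoid (S : Type) (op : S -> S -> S) (e : S) : Prop :=
  forall s t, s <> t ->
    exists (T : finType) (opT : T -> T -> T) (eT : T) (f : S -> T),
      finite_monoid opT eT /\
      (forall a b, f (op a b) = opT (f a) (f b)) /\ f e = eT /\ f s <> f t.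

Definition rees_cong (S : Type) (P : S -> Prop) (a b : S) : Prop :=
  a = b \/ (P a /\ P b).

(* the quotient monoid S/R (R a congruence) is residually finite:
   monoid homomorphisms S/R -> T are exactly monoid homomorphisms S -> T
   constant on R-classes; distinct classes are separated. *)
Definition rf_monoid_quot (S : Type) (op : S -> S -> S) (e : S)
  (R : S -> S -> Prop) : Prop :=
  forall s t, ~ R s t ->
    exists (T : finType) (opT : T -> T -> T) (eT : T) (f : S -> T),
      finite_monoid opT eT /\
      (forall a b, f (op a b) = opT (f a) (f b)) /\ f e = eT /\
      (forall a b, R a b -> f a = f b) /\ f s <> f t.

From mathcomp Require Import all_boot all_fingroup.
From Stdlib Require Import ClassicalEpsilon.
Set Implicit Arguments. Unset Strict Implicit.

(* I = X u {0} is a null semigroup, so points of I are told apart by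
   indicator maps into the null semigroup on three elements.  A monoid
   morphism of M/I is obtained from a morphism of G to a finite group H by
   sending the Rees class I to a zero adjoined to H u {1}.  Finally, the
   kernel of a morphism f from M to a finite monoid, restricted to X, is
   G-invariant because f (x g) = f x * f g; by primitivity f is injective on
   X, impossible since X is infinite, or constant on X, so two distinct
   points of X are never separated. *)

Lemma infinite_type_two_points (X : Type) :
  infinite_type X -> exists x y : X, x <> y.
Proof.
move=> Xinf; apply: NNPP => no_two; apply: Xinf.
have [[x0 _] | X0] := excluded_middle_informative (exists x : X, True).
- exists (x0 :: nil) => x; left; apply: NNPP => ne_x0x.
  by apply: no_two; exists x0, x.
- by exists nil => x; apply: X0; exists x.
Qed.

Lemma injective_finType_not_infinite (X : Type) (T : finType) (f : X -> T) :
  injective f -> ~ infinite_type X.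
Proof.
move=> f_inj; apply.
pose preim (t : T) : option X :=
  match excluded_middle_informative (exists x, f x = t) with
  | left ex_x => Some (proj1_sig (constructive_indefinite_description _ ex_x))
  | right _ => None
  end.
have preimK x : preim (f x) = Some x.
{ rewrite /preim; case: excluded_middle_informative => [ex_x | []]; last by exists x.
  by case: constructive_indefinite_description => y /= /f_inj ->. }
exists (pmap preim (enum T)) => x.
have : f x \in enum T by rewrite mem_enum.
elim: (enum T) => //= t s IHs; rewrite in_cons => /orP [/eqP <- | /IHs].
- by rewrite preimK; left.
- by case: (preim t) => //= y; right.
Qed.

Lemma primitive_invariant_kernel (G X T : Type) (act : X -> G -> X) (h : X -> T) :
  primitive_action act ->
  (forall x y g, h x = h y -> h (act x g) = h (act y g)) ->
  injective h \/ (forall x y, h x = h y).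
Proof.
move=> [_ prim] h_inv; apply: prim => //.
by split=> [// | ]; split=> [x y -> | x y z -> ->].
Qed.

Definition classic_eqb (S : Type) (a b : S) : bool :=
  if excluded_middle_informative (a = b) then true else false.

Lemma classic_eqbP (S : Type) (a b : S) : reflect (a = b) (classic_eqb a b).
Proof. by rewrite /classic_eqb; case: excluded_middle_informative => ?; constructor. Qed.

Lemma null_rf_subsemigroup (S : Type) (op : S -> S -> S) (P : S -> Prop) (z : S) :
  (forall a b, P a -> P b -> op a b = z) -> rf_subsemigroup op P.
Proof.
move=> op_null s t _ _.
wlog nz_s : s t / s <> z.
  move=> sep; have [-> ne_zt | ] := classic_eqbP s z; last exact: sep.
  have ne_tz : t <> z by move=> tz; case: ne_zt.
  have [T [opT [f [opT_assoc [fM ne_f]]]]] := sep t z ne_tz ne_tz.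
  by exists T, opT, f; split=> //; split=> // /esym.
move=> ne_st; pose ind (m : S) := if classic_eqb m z then None else Some (classic_eqb m s).
exists (option bool : finType), (fun _ _ => None), ind.
split=> //; split=> [a b Pa Pb | ].
  by rewrite op_null // /ind; case: classic_eqbP.
rewrite /ind; case: (classic_eqbP s z) => // _; case: (classic_eqbP s s) => // _.
by case: (classic_eqbP t z) => // _; case: (classic_eqbP t s) => // ts; case: ne_st.
Qed.


Section ReesMonoid.
Variables (G X : Type) (mul : G -> G -> G) (act : X -> G -> X).

Local Notation M := (Mon G X).
Local Notation Mmul := (Mmul mul act).
Local Notation inI := (@inI G X).

Lemma inI_ideal : is_ideal Mmul inI.
Proof.
split; first by exists Mzero.
by move=> s [|g|x|] //= _; case: s.
Qed.

Lemma Mmul_inI_null a b : inI a -> inI b -> Mmul a b = Mzero.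
Proof. by case: a => [|g|x|] //; case: b. Qed.

(* [None] is the zero and the flag [true] marks the identity of M, kept
   apart from the identity of H. *)
Definition rees_mul (H : finGroupType) (a b : option (bool * H)) :=
  match a, b with
  | Some (p, x), Some (q, y) => Some (p && q, (x * y)%g)
  | _, _ => None
  end.

Definition rees_rep (H : finGroupType) (phi : G -> H) (m : M) : option (bool * H) :=
  match m with
  | Mone => Some (true, 1%g)
  | MG g => Some (false, phi g)
  | _ => None
  end.

Lemma rees_mul_monoid (H : finGroupType) : finite_monoid (@rees_mul H) (Some (true, 1%g)).
Proof.
split; [|split].
- by move=> [[p x]|] [[q y]|] [[r z]|] //=; rewrite andbA mulgA.
- by move=> [[p x]|] //=; rewrite mul1g.
- by move=> [[p x]|] //=; rewrite andbT mulg1.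
Qed.

Lemma rees_rep_morph (H : finGroupType) (phi : G -> H) :
  (forall a b, phi (mul a b) = (phi a * phi b)%g) ->
  forall a b, rees_rep phi (Mmul a b) = rees_mul (rees_rep phi a) (rees_rep phi b).
Proof. by move=> phiM [|g|x|] [|h|y|] //=; rewrite ?mulg1 ?mul1g ?phiM. Qed.

Lemma rees_rep_cong (H : finGroupType) (phi : G -> H) a b :
  rees_cong inI a b -> rees_rep phi a = rees_rep phi b.
Proof. by move=> [-> // | []]; case: a => //; case: b. Qed.

Lemma rees_rep_separates s t :
  residually_finite_group mul -> ~ rees_cong inI s t ->
  exists (H : finGroupType) (phi : G -> H),
    (forall a b, phi (mul a b) = (phi a * phi b)%g) /\ rees_rep phi s <> rees_rep phi t.
Proof.
move=> rfG not_st.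
case: s t not_st => [|g|x|] [|h|y|] //= not_st;
  try by [case: not_st; first [by left | by right]];
  try by [exists _, (fun _ : G => 1%g : {perm 'I_1}); rewrite mulg1].
have [|H [phi [phiM sep_gh]]] := rfG g h; first by move=> eq_gh; apply: not_st; left; rewrite eq_gh.
by exists H, phi; split=> // -[].
Qed.

Lemma rees_quot_rf : residually_finite_group mul -> rf_monoid_quot Mmul Mone (rees_cong inI).
Proof.
move=> rfG s t not_st.
have [H [phi [phiM sep]]] := rees_rep_separates rfG not_st.
exists _, (@rees_mul H), (Some (true, 1%g)), (rees_rep phi).
split; first exact: rees_mul_monoid.
split; first exact: rees_rep_morph.
by split=> //; split=> // a b; apply: rees_rep_cong.
Qed.

Lemma Mon_not_rf_monoid :
  primitive_action act -> infinite_type X -> ~ rf_monoid Mmul Mone.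
Proof.
move=> prim Xinf rfM.
have [x [y ne_xy]] := infinite_type_two_points Xinf.
have [|T [opT [eT [f [_ [fM [_ sep_xy]]]]]]] := rfM (MX G x) (MX G y); first by case.
have f_inv z w g : f (MX G z) = f (MX G w) -> f (MX G (act z g)) = f (MX G (act w g)).
  move=> eq_zw; rewrite -[MX G (act z g)]/(Mmul (MX G z) (MG X g)).
  by rewrite -[MX G (act w g)]/(Mmul (MX G w) (MG X g)) !fM eq_zw.
have [f_inj | f_const] := primitive_invariant_kernel prim f_inv.
- exact: injective_finType_not_infinite f_inj Xinf.
- exact: sep_xy (f_const x y).
Qed.

End ReesMonoid.

Theorem mainTheorem12 (G X : Type) (mul : G -> G -> G) (one : G) (inv : G -> G)
  (act : X -> G -> X)
  (HG : is_group mul one inv)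
  (Hact : is_right_action mul one act)
  (Hrf : residually_finite_group mul)
  (Hprim : primitive_action act)
  (Hinf : infinite_type X) :
  is_ideal (Mmul mul act) (@inI G X) /\
  rf_subsemigroup (Mmul mul act) (@inI G X) /\
  rf_monoid_quot (Mmul mul act) Mone (rees_cong (@inI G X)) /\
  ~ rf_monoid (Mmul mul act) Mone.
Proof.
(* [HG] and [Hact] make M a monoid, but none of the four claims depends on it. *)
split; first exact: inI_ideal.
split; first exact: (null_rf_subsemigroup (@Mmul_inI_null G X mul act)).
split; first exact: rees_quot_rf.
exact: Mon_not_rf_monoid.
Qed.
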